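(* Let $\varphi:(\alpha,\beta)\to\mathbb{R}^n$ with $-\infty\le\alpha<0<\beta\le\infty$. Then $\varphi$ is the coordinate projection of a solution of a Noetherian initial value problem if and only if $\varphi$ is the coordinate projection of a solution of a polynomial initial value problem.
   Context: A Noetherian chain is a sequence of real analytic functions $h_1,\dots,h_r:H\to\mathbb{R}$ on an open connected set $H\subseteq\mathbb{R}^k$ such that for all $i\le k$, $j\le r$ there is a polynomial $q_{ij}\in\mathbb{R}[y_1,\dots,y_k,z_1,\dots,z_r]$ with $\frac{\partial h_j}{\partial y_i}(y)=q_{ij}(y,h_1(y),\dots,h_r(y))$ on $H$. A function $h:H\to\mathbb{R}$ is Noetherian if $h(y)=p(y,h_1(y),\dots,h_r(y))$ for some polynomial $p$ with real coefficients and some Noetherian chain $h_1,\dots,h_r$ on $H$. An initial value problem (IVP) of dimension $m$ is given by a map $F:D\to\mathbb{R}^m$ on an open connected domain $D\subseteq\mathbb{R}^m$ and an initial value $X_0\in D$; it is Noetherian if every component of $F$ is a Noetherian function on $D$, and polynomial if $D=\mathbb{R}^m$ and every component of $F$ is a polynomial. A solution on $(\alpha,\beta)$ is a differentiable $\psi:(\alpha,\beta)\to D$ with $\psi(0)=X_0$ and $\psi'(t)=F(\psi(t))$ for all $t$. We say $\varphi:(\alpha,\beta)\to\mathbb{R}^n$ is the coordinate projection of a solution of an IVP of dimension $m\ge n$ if there is a solution $\psi$ on $(\alpha,\beta)$ of that IVP whose first $n$ coordinates equal $\varphi$. *)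

From HB Require Import structures.
From mathcomp Require Import all_boot all_order all_algebra.
From mathcomp Require Import all_classical all_reals all_analysis.
From mathcomp Require mpoly.
Set Implicit Arguments. Unset Strict Implicit. Unset Printing Implicit Defensive.
Import Order.TTheory GRing.Theory Num.Theory.
Import numFieldNormedType.Exports.
Local Open Scope classical_set_scope.
Local Open Scope ring_scope.

Section Defs.
Variable R : realType.

Definition rpoly (n : nat) := mpoly.mpoly n R.
Definition peval (n : nat) (p : rpoly n) (v : 'I_n -> R) : R := mpoly.meval v p.

Definition pseries_partial (k : nat) (c : ('I_k -> nat) -> R) (a y : 'rV[R]_k)
  (abs : bool) (N : nat) : R :=
  \sum_(al : {ffun 'I_k -> 'I_N.+1} | (\sum_i (al i : nat) <= N)%N)
     (if abs then `|c (fun i => al i)| * \prod_i `|y 0 i - a 0 i| ^+ al i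
      else c (fun i => al i) * \prod_i (y 0 i - a 0 i) ^+ al i).

Definition analytic_at (k : nat) (f : 'rV[R]_k -> R) (a : 'rV[R]_k) : Prop :=
  exists (c : ('I_k -> nat) -> R) (r : R), 0 < r /\
    forall y : 'rV[R]_k, `|y - a| < r ->
      cvg (pseries_partial c a y true @ \oo) /\
      pseries_partial c a y false @ \oo --> f y.

Definition real_analytic_on (k : nat) (H : set 'rV[R]_k) (f : 'rV[R]_k -> R) :=
  forall a, H a -> analytic_at f a.

Definition evec (k : nat) (i : 'I_k) : 'rV[R]_k := delta_mx 0 i.

Definition ext_point (k r : nat) (h : 'I_r -> 'rV[R]_k -> R) (y : 'rV[R]_k)
  : 'I_(k + r) -> R :=
  fun j => match fintype.split j with inl j' => y 0 j' | inr j' => h j' y end.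

Definition noetherian_chain (k r : nat) (H : set 'rV[R]_k)
  (h : 'I_r -> 'rV[R]_k -> R) : Prop :=
  open H /\ connected H /\
  (forall j, real_analytic_on H (h j)) /\
  forall (i : 'I_k) (j : 'I_r), exists q : rpoly (k + r),
    forall y, H y -> derivable (h j) y (evec i) /\
                     'D_(evec i) (h j) y = peval q (ext_point h y).

Definition noetherian_fun (k : nat) (H : set 'rV[R]_k) (f : 'rV[R]_k -> R) : Prop :=
  exists (r : nat) (h : 'I_r -> 'rV[R]_k -> R) (p : rpoly (k + r)),
    noetherian_chain H h /\ forall y, H y -> f y = peval p (ext_point h y).

Definition noetherian_ivp (m : nat) (D : set 'rV[R]_m)
  (F : 'rV[R]_m -> 'rV[R]_m) (X0 : 'rV[R]_m) : Prop :=
  open D /\ connected D /\ D X0 /\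
  forall l : 'I_m, noetherian_fun D (fun x => F x 0 l).

Definition polynomial_ivp (m : nat) (D : set 'rV[R]_m)
  (F : 'rV[R]_m -> 'rV[R]_m) (X0 : 'rV[R]_m) : Prop :=
  D = setT /\ forall l : 'I_m, exists p : rpoly m,
    forall x, F x 0 l = peval p (fun j => x 0 j).

Definition ivp_solution (m : nat) (D : set 'rV[R]_m)
  (F : 'rV[R]_m -> 'rV[R]_m) (X0 : 'rV[R]_m) (alpha beta : \bar R)
  (psi : R -> 'rV[R]_m) : Prop :=
  psi 0 = X0 /\
  forall t : R, (alpha < t%:E < beta)%E ->
    D (psi t) /\ derivable psi t 1 /\ derive1 psi t = F (psi t).

Definition coord_proj_of (cls : forall m : nat, set 'rV[R]_m ->
      ('rV[R]_m -> 'rV[R]_m) -> 'rV[R]_m -> Prop)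
  (n : nat) (alpha beta : \bar R) (phi : R -> 'rV[R]_n) : Prop :=
  exists (m : nat) (hnm : (n <= m)%N) (D : set 'rV[R]_m)
         (F : 'rV[R]_m -> 'rV[R]_m) (X0 : 'rV[R]_m) (psi : R -> 'rV[R]_m),
    cls m D F X0 /\ ivp_solution D F X0 alpha beta psi /\
    forall t : R, (alpha < t%:E < beta)%E ->
      forall i : 'I_n, psi t 0 (widen_ord hnm i) = phi t 0 i.

End Defs.

(* A polynomial IVP is Noetherian: R^m is open and connected, and a polynomial
   in x is a Noetherian function with the empty chain.
   Conversely, write each component of a Noetherian field as
   F_l(x) = p_l(x, h_l(x)) with a Noetherian chain h_l, and adjoin every value
   h_{l,j}(psi(t)) as a new coordinate. Along the solution psi the chain rule
   gives d/dt h_{l,j}(psi) = sum_i F_i(psi) q_{l,i,j}(psi, h_l(psi)), a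
   polynomial in the enlarged state, so the lifted curve solves a polynomial IVP
   and keeps the first n coordinates. The chain rule applies because the partial
   derivatives q_{l,i,j}(x, h_l(x)) are continuous: each h_{l,j} is locally
   bounded (it is the sum of a power series) and so are its partial
   derivatives, which makes it locally Lipschitz by the mean value theorem. *)

From HB Require Import structures.
From mathcomp Require Import all_boot all_order all_algebra.
From mathcomp Require Import all_classical all_reals all_analysis.
From mathcomp Require mpoly.
Import -(notations) mpoly.
Set Implicit Arguments. Unset Strict Implicit. Unset Printing Implicit Defensive.
Import Order.TTheory GRing.Theory Num.Theory.
Import numFieldNormedType.Exports.
Local Open Scope classical_set_scope.
Local Open Scope ring_scope.

Section mx_norm.
Variable K : realDomainType.

Lemma mx_entry_norm_le m n (M : 'M[K]_(m, n)) i j : `|M i j| <= `|M|.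
Proof.
rewrite [leRHS]/Num.Def.normr /= mx_normrE.
by apply/bigmax_geP; right; exists (i, j).
Qed.

Lemma mx_norm_le m n (M : 'M[K]_(m, n)) c :
  0 <= c -> (forall i j, `|M i j| <= c) -> `|M| <= c.
Proof.
move=> c0 Mc; rewrite [leLHS]/Num.Def.normr /= mx_normrE.
by apply: bigmax_le => // -[i j] _; exact: Mc.
Qed.

End mx_norm.

Section polynomial_evaluation.
Variable R : realType.

Definition pvar M (i : 'I_M) : rpoly R M := mpoly.mpolyX R (mpoly.mnm1 i).

Lemma pvarE M (i : 'I_M) v : peval (pvar i) v = v i.
Proof. exact: mpoly.mevalXU. Qed.

Definition psubst N M (s : 'I_N -> rpoly R M) (p : rpoly R N) : mpoly.mpoly M R :=
  mpoly.comp_mpoly [tuple s i | i < N] p.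

Lemma psubstE N M (s : 'I_N -> rpoly R M) (p : rpoly R N) v :
  peval (psubst s p) v = peval p (fun i => peval (s i) v).
Proof.
rewrite /peval /psubst mpoly.comp_mpoly_meval.
by apply: mpoly.meval_eq => i; rewrite tnth_mktuple.
Qed.

Lemma peval_sum M (I : Type) (r : seq I) (P : I -> mpoly.mpoly M R) v :
  peval (\sum_(i <- r) P i) v = \sum_(i <- r) peval (P i) v.
Proof. by rewrite /peval (big_morph _ (mpoly.mevalD v) (mpoly.meval0 v)). Qed.

Lemma pevalM M (p q : mpoly.mpoly M R) v :
  peval (p * q) v = peval p v * peval q v.
Proof. exact: mpoly.mevalM. Qed.

Lemma peval_bounded N (p : rpoly R N) (B : R) :
  exists C, forall v, (forall j, `|v j| <= B) -> `|peval p v| <= C.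
Proof.
exists (\sum_(m <- mpoly.msupp p) `|mpoly.mcoeff m p| *
          \prod_i `|B| ^+ mpoly.fun_of_multinom m i) => v vB.
rewrite /peval mpoly.mevalE (le_trans (ler_norm_sum _ _ _)) //.
apply: ler_sum => m _; rewrite normrM normr_prod ler_wpM2l //.
apply: ler_prod => i _; rewrite normrX exprn_ge0 //= lerXn2r ?nnegrE //.
exact: le_trans (vB i) (ler_norm B).
Qed.

Lemma peval_bounded_near {T : Type} {F : set_system T} {FF : ProperFilter F}
    N (p : rpoly R N) (V : T -> 'I_N -> R) :
  (forall j, bounded_near (fun x => V x j) F) ->
  bounded_near (fun x => peval p (V x)) F.
Proof.
move=> Vb; have [M MP] := choice (fun j => (ex_bound _).1 (Vb j)).
have [C pC] := peval_bounded p (\sum_j `|M j|).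
apply/ex_bound; exists C.
have MPall := filter_forall (f := fun j x => `|V x j| <= M j) FF MP.
apply: filterS MPall => x VM; apply: pC => j.
apply: le_trans (VM j) (le_trans (ler_norm _) _).
by rewrite (bigD1 j) //= lerDl sumr_ge0.
Qed.

Lemma cvg_peval {T : Type} {F : set_system T} {FF : Filter F} N (p : rpoly R N)
    (V : T -> 'I_N -> R) v :
  (forall j, V x j @[x --> F] --> v j) -> peval p (V x) @[x --> F] --> peval p v.
Proof.
move=> Vv; rewrite /peval mpoly.mevalE.
under eq_cvg do rewrite mpoly.mevalE.
apply: cvg_big => [|m _]; first exact: add_continuous.
apply: cvgM; first exact: cvg_cst.
apply: cvg_big => [|i _]; first exact: mul_continuous.
exact: (cvg_comp _ _ (Vv i) (@exprn_continuous R (m i) (v i))).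
Qed.

End polynomial_evaluation.

Arguments pvar {R M} i.

Section mean_value.
Variable R : realType.

Lemma MVT_between (f : R -> R) (a b : R) : a <= b ->
  (forall x, a <= x <= b -> derivable f x 1) ->
  exists2 c, a <= c <= b & f b - f a = 'D_1 f c * (b - a).
Proof.
move=> ab df.
have dfab x : x \in `]a, b[ -> is_derive x 1 f ('D_1 f x).
  by rewrite in_itv /= => /andP[ax xb]; apply/derivableP/df; rewrite !ltW.
have cf : {within `[a, b], continuous f}.
  by apply: derivable_within_continuous => x; rewrite in_itv /= => /df.
by have [c] := MVT_segment ab dfab cf; rewrite in_itv /=; exists c.
Qed.

Lemma MVT_centered (f : R -> R) (d : R) :
  (forall u, `|u| <= `|d| -> derivable f u 1) ->
  exists2 c, `|c| <= `|d| & f d - f 0 = 'D_1 f c * d.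
Proof.
move=> df; have [d0|d0] := leP 0 d.
  have [|c /andP[c0 cd] E] := MVT_between (f := f) d0.
    by move=> x /andP[x0 xd]; apply: df; rewrite !ger0_norm.
  by exists c; [rewrite !ger0_norm | rewrite E subr0].
have [|c /andP[dc c0] E] := MVT_between (f := f) (ltW d0).
  by move=> x /andP[dx x0]; apply: df; rewrite !ler0_norm ?lerN2 // ltW.
exists c; first by rewrite !ler0_norm ?lerN2 // ltW.
by apply/eqP; rewrite -eqr_opp opprB E sub0r mulrN.
Qed.

End mean_value.

Section increments.
Variable R : realType.

Lemma near_dist_lt k (y : 'rV[R]_k) e : 0 < e -> \forall z \near y, `|z - y| < e.
Proof. exact: (@cvgr_distC_lt _ _ _ (nbhs y) _ id y cvg_id). Qed.

Lemma line_quotientE k (h : 'rV[R]_k -> R) (b e : 'rV[R]_k) (c : R) :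
  (fun d : R => d^-1 *: (((fun u => h (b + u *: e)) \o shift c) (d *: 1)
                          - h (b + c *: e))) =
  (fun d : R => d^-1 *: ((h \o shift (b + c *: e)) (d *: e) - h (b + c *: e))).
Proof.
by apply/funext => d /=; rewrite -[d%:A]/(d * 1) mulr1 scalerDl addrCA.
Qed.

Section staircase.
Variables (k : nat) (y y' : 'rV[R]_k).

Definition stair (p : nat) : 'rV[R]_k :=
  \row_j (if (j < p)%N then y' 0 j else y 0 j).

Lemma stair0 : stair 0 = y.
Proof. by apply/rowP => j; rewrite mxE. Qed.

Lemma stair_last : stair k = y'.
Proof. by apply/rowP => j; rewrite mxE ltn_ord. Qed.

Lemma stairS (i : 'I_k) : stair i.+1 = stair i + (y' 0 i - y 0 i) *: evec R i.
Proof.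
apply/rowP => j; rewrite !mxE /= ltnS leq_eqVlt -val_eqE /=.
by case: ltngtP => [ji|ij|/val_inj ->]; rewrite ?mulr0 ?addr0 // mulr1 addrC subrK.
Qed.

Lemma stair_dist (i : 'I_k) u : `|u| <= `|y' 0 i - y 0 i| ->
  `|stair i + u *: evec R i - y| <= `|y' - y|.
Proof.
move=> ud; apply: mx_norm_le => // a j; rewrite (ord1 a) !mxE /= -val_eqE /=.
have := mx_entry_norm_le (y' - y) 0 j; rewrite !mxE.
case: ltngtP => [ji|ij|/val_inj ->] /= yj; rewrite ?mulr0 ?addr0 ?subrr ?normr0 //.
by rewrite mulr1 addrAC subrr add0r (le_trans ud).
Qed.

End staircase.

Lemma increment_mvt k (h : 'rV[R]_k -> R) (y y' : 'rV[R]_k) :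
  (forall z, `|z - y| <= `|y' - y| -> forall i, derivable h z (evec R i)) ->
  exists xi : 'I_k -> 'rV[R]_k, (forall i, `|xi i - y| <= `|y' - y|) /\
    h y' - h y = \sum_i (y' 0 i - y 0 i) * 'D_(evec R i) h (xi i).
Proof.
move=> dh.
have step (i : 'I_k) : exists x, `|x - y| <= `|y' - y| /\
    h (stair y y' i.+1) - h (stair y y' i) = (y' 0 i - y 0 i) * 'D_(evec R i) h x.
  pose f u := h (stair y y' i + u *: evec R i).
  have [u ud|c cd E] := MVT_centered (f := f) (d := y' 0 i - y 0 i).
    by rewrite /derivable line_quotientE; apply: dh; exact: stair_dist.
  exists (stair y y' i + c *: evec R i); split; first exact: stair_dist.
  rewrite stairS mulrC; move: E; rewrite /f scale0r addr0 => ->.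
  by congr (_ * _); rewrite /derive line_quotientE.
have [xi xiP] := choice step; exists xi; split=> [i|]; first by case: (xiP i).
rewrite -[in h y'](stair_last y y') -[in h y](stair0 y y').
rewrite -(telescope_sumr (fun p => h (stair y y' p))) // big_mkord.
by apply: eq_bigr => i _; case: (xiP i).
Qed.

Lemma increment_partials k (h : 'rV[R]_k -> R) (y : 'rV[R]_k) :
  (\forall z \near y, forall i, derivable h z (evec R i)) ->
  exists Xi : 'rV[R]_k -> 'I_k -> 'rV[R]_k,
    (forall i, Xi z i @[z --> y] --> y) /\
    \forall z \near y,
      h z - h y = \sum_i (z 0 i - y 0 i) * 'D_(evec R i) h (Xi z i).
Proof.
move=> /nbhs_ballP[rho rho0 dh].
have near_rho := near_dist_lt y rho0.
have Xi_ex z : exists xi : 'I_k -> 'rV[R]_k, `|z - y| < rho ->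
    (forall i, `|xi i - y| <= `|z - y|) /\
    h z - h y = \sum_i (z 0 i - y 0 i) * 'D_(evec R i) h (xi i).
  have [zy|_] := ltP `|z - y| rho; last by exists (fun=> y).
  have [|xi xiP] := increment_mvt (h := h) (y := y) (y' := z); last by exists xi.
  move=> w wy; apply: dh; rewrite -ball_normE /= distrC.
  exact: le_lt_trans wy zy.
have [Xi XiP] := choice Xi_ex; exists Xi; split; last first.
  by apply: filterS near_rho => z /XiP[].
move=> i; apply/(@cvgrPdistC_lt _ _ _ _ (nbhs_filter y)) => e e0.
near=> z; apply: le_lt_trans ((XiP z _).1 i) _; near: z; first exact: near_rho.
exact: near_dist_lt.
Unshelve. all: by end_near.
Qed.

End increments.

Section partial_calculus.
Variable R : realType.

Lemma continuous_bounded_partials k (h : 'rV[R]_k -> R) (y : 'rV[R]_k) :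
  (\forall z \near y, forall i, derivable h z (evec R i)) ->
  (forall i, bounded_near ('D_(evec R i) h) (nbhs y)) ->
  {for y, continuous h}.
Proof.
move=> dh bh; have [Xi [XiP incr]] := increment_partials dh.
have /choice[M MP] : forall i, exists Mi : R,
    \forall z \near y, `|'D_(evec R i) h (Xi z i)| <= Mi.
  by move=> i; have /ex_bound[Mi /(XiP i)] := bh i; exists Mi.
have Mall : \forall z \near y, forall i, `|'D_(evec R i) h (Xi z i)| <= M i.
  exact: (filter_forall (f := fun i z => `|'D_(evec R i) h (Xi z i)| <= M i)) MP.
pose C := \sum_i `|M i|.
have C0 : 0 <= C by rewrite sumr_ge0.
have lip : \forall z \near y, `|h z - h y| <= `|z - y| * C.
  near=> z; rewrite (near incr z) // (le_trans (ler_norm_sum _ _ _)) //.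
  rewrite mulr_sumr ler_sum // => i _; rewrite normrM ler_pM //.
    by have := mx_entry_norm_le (z - y) 0 i; rewrite !mxE.
  exact: le_trans (near Mall z _ i) (ler_norm _).
apply/(@cvgrPdistC_le _ _ _ _ (nbhs_filter y)) => e e0.
have eC : 0 < e / (C + 1) by rewrite divr_gt0 // ltr_wpDl.
apply: filterS2 lip (near_dist_lt y eC) => z hz /ltW zy.
rewrite (le_trans hz) // (le_trans (ler_wpM2r C0 zy)) //.
by rewrite mulrAC ler_pdivrMr ?ltr_wpDl // ler_pM2l // lerDl.
Unshelve. all: by end_near.
Qed.

Lemma derive1_quotientE (V : normedModType R) (f : R -> V) (t : R) :
  (fun s : R => s^-1 *: ((f \o shift t) (s *: 1) - f t)) =
  (fun s : R => s^-1 *: (f (s + t) - f t)).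
Proof. by apply/funext => s /=; rewrite -[s%:A]/(s * 1) mulr1. Qed.

Lemma derivable1_quotient (V : normedModType R) (f : R -> V) (t : R) :
  derivable f t 1 -> s^-1 *: (f (s + t) - f t) @[s --> 0^'] --> 'D_1 f t.
Proof. by rewrite /derivable /derive derive1_quotientE. Qed.

Lemma quotient_derivable1 (V : normedModType R) (f : R -> V) (t : R) (l : V) :
  s^-1 *: (f (s + t) - f t) @[s --> 0^'] --> l ->
  derivable f t 1 /\ 'D_1 f t = l.
Proof.
rewrite /derivable /derive derive1_quotientE => fl.
by split; [apply/cvg_ex; exists l | exact: cvg_lim].
Qed.

Lemma derivable1_shift_cvg (V : normedModType R) (f : R -> V) (t : R) :
  derivable f t 1 -> f (s + t) @[s --> 0^'] --> f t.
Proof.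
move=> df; have st : (s + t) @[s --> 0^'] --> t.
  have : (s + t) @[s --> (0 : R)] --> 0 + t.
    by apply: cvgD; [exact: cvg_id | exact: cvg_cst].
  by rewrite add0r; apply: cvg_trans; apply: cvg_app; exact: cvg_within.
apply: continuous_cvg st; apply: differentiable_continuous.
by rewrite -derivable1_diffP.
Qed.

Lemma derive1_comp_partials k (h : 'rV[R]_k -> R) (g : 'I_k -> 'rV[R]_k -> R)
    (psi : R -> 'rV[R]_k) (t : R) :
  (\forall z \near psi t,
     forall i, derivable h z (evec R i) /\ 'D_(evec R i) h z = g i z) ->
  (forall i, {for psi t, continuous (g i)}) ->
  derivable psi t 1 ->
  derivable (h \o psi) t 1 /\
  'D_1 (h \o psi) t = \sum_i 'D_1 psi t 0 i * g i (psi t).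
Proof.
move=> dh gc dpsi; set y := psi t.
have [Xi [XiP incr]] : exists Xi : 'rV[R]_k -> 'I_k -> 'rV[R]_k,
    (forall i, Xi z i @[z --> y] --> y) /\ \forall z \near y,
      h z - h y = \sum_i (z 0 i - y 0 i) * 'D_(evec R i) h (Xi z i).
  by apply: increment_partials; apply: filterS dh => z dhz i; case: (dhz i).
have psi_cvg := derivable1_shift_cvg dpsi.
have dhXi : \forall s \near 0^', forall i,
    'D_(evec R i) h (Xi (psi (s + t)) i) = g i (Xi (psi (s + t)) i).
  apply: (filter_forall (f := fun i s => 'D_(evec R i) h (Xi (psi (s + t)) i) =
                                          g i (Xi (psi (s + t)) i))) => i /=.
  apply: (cvg_comp _ _ psi_cvg (XiP i) (fun z => 'D_(evec R i) h z = g i z)).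
  by apply: filterS dh => z /(_ i)[].
have incr_s : \forall s \near 0^', h (psi (s + t)) - h y =
    \sum_i (psi (s + t) 0 i - y 0 i) * 'D_(evec R i) h (Xi (psi (s + t)) i).
  exact: psi_cvg _ incr.
(* Near 0 the difference quotient of h \o psi is Q, whose partial derivatives
   are taken at intermediate points converging to psi t. *)
pose Q s := \sum_i s^-1 * (psi (s + t) 0 i - y 0 i) * g i (Xi (psi (s + t)) i).
have QE : {near 0^', Q =1 fun s => s^-1 *: (h (psi (s + t)) - h y)}.
  near=> s; rewrite /Q /= (near incr_s s) // /GRing.scale /= mulr_sumr.
  by apply: eq_bigr => i _; rewrite (near dhXi s) // mulrA.
apply: quotient_derivable1; apply: cvg_trans (near_eq_cvg QE) _.
apply: cvg_big => [|i _]; first exact: add_continuous.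
apply: cvgM; last exact: cvg_comp _ _ (cvg_comp _ _ psi_cvg (XiP i)) (gc i).
rewrite (derive_mx dpsi) mxE.
have := derivable1_quotient ((derivable_mxP psi t 1).1 dpsi 0 i).
by under eq_cvg do rewrite /GRing.scale /=.
Unshelve. all: by end_near.
Qed.

End partial_calculus.

Section noetherian_chain_continuity.
Variable R : realType.

Lemma cvg_norm_le_bound (u : nat -> R) (l B : R) :
  u n @[n --> \oo] --> l -> (forall n, `|u n| <= B) -> `|l| <= B.
Proof.
move=> ul uB; apply/ler_addgt0Pr => e e0.
have [N _ lN] := @cvgr_dist_lt _ _ _ _ _ _ _ ul _ e0.
rewrite -(subrK (u N) l) (le_trans (ler_normD _ _)) // addrC lerD //.
by apply/ltW/lN; rewrite /= leqnn.
Qed.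

Lemma pseries_partial_le k (c : ('I_k -> nat) -> R) (a y z : 'rV[R]_k) N :
  (forall i, `|y 0 i - a 0 i| <= `|z 0 i - a 0 i|) ->
  `|pseries_partial c a y false N| <= pseries_partial c a z true N.
Proof.
move=> yz; rewrite (le_trans (ler_norm_sum _ _ _)) // ler_sum // => al _.
rewrite normrM normr_prod ler_wpM2l // ler_prod // => i _.
by rewrite normrX exprn_ge0 // lerXn2r ?nnegrE.
Qed.

Lemma analytic_at_bounded k (f : 'rV[R]_k -> R) (a : 'rV[R]_k) :
  analytic_at f a -> bounded_near f (nbhs a).
Proof.
move=> [c [r [r0 fc]]]; have r2 : 0 < r / 2 by rewrite divr_gt0.
have r2r : r / 2 < r by rewrite ltr_pdivrMr // ltr_pMr // ltr1n.
(* The absolute series at the corner z of the cube of half-width r / 2 around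
   a dominates the partial sums at every point of that cube. *)
pose z := a + (r / 2) *: const_mx 1.
have za i : z 0 i - a 0 i = r / 2 by rewrite !mxE mulr1 addrAC subrr add0r.
have zr : `|z - a| < r.
  apply: le_lt_trans r2r; apply: mx_norm_le => [|u i]; first exact: ltW.
  by rewrite (ord1 u) !mxE mulr1 addrAC subrr add0r gtr0_norm.
have [M [_ MP]] := cvg_seq_bounded (fc z zr).1.
apply/ex_bound; exists (M + 1).
apply: filterS (near_dist_lt a r2) => y ya.
apply: cvg_norm_le_bound (fc y (lt_trans ya r2r)).2 _ => N.
change (`|pseries_partial c a y false N| <= M + 1).
have yz i : `|y 0 i - a 0 i| <= `|z 0 i - a 0 i|.
  rewrite za [X in _ <= X]gtr0_norm //; apply: le_trans _ (ltW ya).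
  by have := mx_entry_norm_le (y - a) 0 i; rewrite !mxE.
apply: le_trans (@pseries_partial_le k c a y z N yz) _.
apply: le_trans (ler_norm _) (MP (M + 1) _ N I).
by rewrite ltrDl.
Qed.

Lemma noetherian_chain_continuous k r (H : set 'rV[R]_k)
    (h : 'I_r -> 'rV[R]_k -> R) j a :
  noetherian_chain H h -> H a -> {for a, continuous (h j)}.
Proof.
move=> [Ho [_ [h_an h_der]]] Ha; have Hnear : \forall z \near a, H z by exact: Ho.
apply: continuous_bounded_partials => [|i].
  by apply: filterS Hnear => z Hz i; have [q /(_ z Hz)[]] := h_der i j.
have [q qP] := h_der i j.
apply: (@sub_boundedl _ _ _ _ (fun z => peval q (ext_point h z))).
  by apply: filterS Hnear => z Hz; rewrite (qP z Hz).2.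
apply: peval_bounded_near => l; rewrite /ext_point.
case: (fintype.split l) => [i'|j'].
  by apply: cvg_bounded; exact: coord_continuous.
exact: analytic_at_bounded (h_an j' a Ha).
Qed.

End noetherian_chain_continuity.

Lemma peval_ext_point_continuous (R : realType) k r (H : set 'rV[R]_k)
    (h : 'I_r -> 'rV[R]_k -> R) (q : rpoly R (k + r)) a :
  noetherian_chain H h -> H a ->
  {for a, continuous (fun z => peval q (ext_point h z))}.
Proof.
move=> hc Ha; apply: (cvg_peval (FF := nbhs_filter a)) => l; rewrite /ext_point.
case: (fintype.split l) => [i|j]; first exact: coord_continuous.
exact: noetherian_chain_continuous hc Ha.
Qed.

Section chain_lift.
Variables (R : realType) (m : nat) (D : set 'rV[R]_m) (F : 'rV[R]_m -> 'rV[R]_m).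
Variables (r : 'I_m -> nat) (h : forall l, 'I_(r l) -> 'rV[R]_m -> R).
Variables (p : forall l, rpoly R (m + r l)).
Variables (q : forall l, 'I_m -> 'I_(r l) -> rpoly R (m + r l)).
Arguments h : clear implicits.
Arguments q : clear implicits.
Hypothesis D_open : open D.
Hypothesis h_chain : forall l, noetherian_chain D (h l).
Hypothesis h_der : forall l i j y, D y ->
  derivable (h l j) y (evec R i) /\
  'D_(evec R i) (h l j) y = peval (q l i j) (ext_point (h l) y).
Hypothesis F_eq : forall l y, D y -> F y 0 l = peval (p l) (ext_point (h l) y).

Let S := #|{: {l : 'I_m & 'I_(r l)}}|.

Definition chain_lift (x : 'rV[R]_m) : 'rV[R]_(m + S) :=
  \row_k match fintype.split k with
         | inl i => x 0 i
         | inr e => h (tag (enum_val e)) (tagged (enum_val e)) x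
         end.

Definition chain_var l (j : 'I_(m + r l)) : rpoly R (m + S) :=
  match fintype.split j with
  | inl i => pvar (lshift S i)
  | inr j' => pvar (rshift m (enum_rank (Tagged (fun l => 'I_(r l)) j')))
  end.
Arguments chain_var : clear implicits.

Lemma peval_chain_var l x :
  (fun j => peval (chain_var l j) (chain_lift x 0)) = ext_point (h l) x.
Proof.
apply/funext => j; rewrite /chain_var /ext_point.
case: (fintype.split j) => [i|j']; rewrite pvarE mxE.
  by rewrite (unsplitK (inl i)).
by rewrite (unsplitK (inr _)) enum_rankK.
Qed.

(* The coordinate of h_{l,j} gets sum_i q_{l,i,j} F_i, its derivative along
   solutions by the chain rule. *)
Definition lifted_field_poly (k : 'I_(m + S)) : mpoly.mpoly (m + S) R :=
  match fintype.split k with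
  | inl l => psubst (chain_var l) (p l)
  | inr e => let: existT l j := enum_val e in
      \sum_i psubst (chain_var l) (q l i j) * psubst (chain_var i) (p i)
  end.

Definition lifted_field (X : 'rV[R]_(m + S)) : 'rV[R]_(m + S) :=
  \row_k peval (lifted_field_poly k) (X 0).

Lemma lifted_field_polynomial X0 : polynomial_ivp setT lifted_field X0.
Proof. by split=> // k; exists (lifted_field_poly k) => x; rewrite mxE. Qed.

Lemma derive_chain_lift (psi : R -> 'rV[R]_m) t :
  D (psi t) -> derivable psi t 1 -> 'D_1 psi t = F (psi t) ->
  derivable (chain_lift \o psi) t 1 /\
  'D_1 (chain_lift \o psi) t = lifted_field (chain_lift (psi t)).
Proof.
move=> Dt dpsi psiF.
have Fpsi l :
    'D_1 psi t 0 l = peval (psubst (chain_var l) (p l)) (chain_lift (psi t) 0).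
  by rewrite psubstE peval_chain_var -F_eq // psiF.
have comp k : derivable (fun s => chain_lift (psi s) 0 k) t 1 /\
    'D_1 (fun s => chain_lift (psi s) 0 k) t =
      lifted_field (chain_lift (psi t)) 0 k.
  rewrite mxE /lifted_field_poly; under [fun s => _]funext do rewrite mxE.
  case: (fintype.split k) => [l|e].
    split; first exact: (derivable_mxP psi t 1).1 dpsi 0 l.
    by rewrite -Fpsi (derive_mx dpsi) mxE.
  case: (enum_val e) => l j /=.
  have dh : \forall z \near psi t, forall i, derivable (h l j) z (evec R i) /\
      'D_(evec R i) (h l j) z = peval (q l i j) (ext_point (h l) z).
    by apply: filterS (D_open Dt) => z Dz i; exact: h_der.
  have gc i := peval_ext_point_continuous (q := q l i j) (h_chain l) Dt.
  have [dhpsi Dhpsi] := derive1_comp_partials dh gc dpsi.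
  rewrite -[fun s => _]/(h l j \o psi).
  rewrite Dhpsi; split => //; rewrite peval_sum; apply: eq_bigr => i _.
  by rewrite pevalM psubstE peval_chain_var Fpsi mulrC.
have dlift : derivable (chain_lift \o psi) t 1.
  by apply/derivable_mxP => i k; rewrite (ord1 i); exact: (comp k).1.
split=> //; rewrite (derive_mx dlift); apply/matrixP => i k.
by rewrite (ord1 i) [LHS]mxE; exact: (comp k).2.
Qed.

Lemma chain_lift_solution X0 alpha beta psi :
  ivp_solution D F X0 alpha beta psi ->
  ivp_solution setT lifted_field (chain_lift X0) alpha beta (chain_lift \o psi).
Proof.
move=> [psi0 sol]; split=> [|t /sol[Dt [dpsi]]]; first by rewrite /= psi0.
by rewrite !derive1E => /(derive_chain_lift Dt dpsi)[].
Qed.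

Lemma chain_lift_coord_proj n alpha beta (phi : R -> 'rV[R]_n) X0 psi
    (hnm : (n <= m)%N) :
  ivp_solution D F X0 alpha beta psi ->
  (forall t, (alpha < t%:E < beta)%E ->
     forall i, psi t 0 (widen_ord hnm i) = phi t 0 i) ->
  coord_proj_of (@polynomial_ivp R) alpha beta phi.
Proof.
move=> sol proj; exists (m + S), (leq_trans hnm (leq_addr S m)), setT,
  lifted_field, (chain_lift X0), (chain_lift \o psi).
split; first exact: lifted_field_polynomial.
split=> [|t tin i]; first exact: chain_lift_solution.
rewrite -proj // /= mxE (_ : widen_ord _ i = lshift S (widen_ord hnm i)).
  by rewrite (unsplitK (inl _)).
exact: val_inj.
Qed.

End chain_lift.

Lemma noetherian_ivp_chains (R : realType) m (D : set 'rV[R]_m)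
    (F : 'rV[R]_m -> 'rV[R]_m) (X0 : 'rV[R]_m) :
  noetherian_ivp D F X0 ->
  exists (r : 'I_m -> nat) (h : forall l, 'I_(r l) -> 'rV[R]_m -> R)
         (p : forall l, rpoly R (m + r l))
         (q : forall l, 'I_m -> 'I_(r l) -> rpoly R (m + r l)),
    [/\ forall l, noetherian_chain D (h l),
        forall l i j y, D y -> derivable (h l j) y (evec R i) /\
          'D_(evec R i) (h l j) y = peval (q l i j) (ext_point (h l) y)
      & forall l y, D y -> F y 0 l = peval (p l) (ext_point (h l) y)].
Proof.
move=> [_ [_ [_ FN]]].
have /choice[w wP] : forall l,
    exists w : {r : nat & ('I_r -> 'rV[R]_m -> R) * rpoly R (m + r)},
    noetherian_chain D (projT2 w).1 /\
    forall y, D y -> F y 0 l = peval (projT2 w).2 (ext_point (projT2 w).1 y).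
  by move=> l; have [r [h [p [hc Fp]]]] := FN l; exists (existT _ r (h, p)).
have qP l i j := (wP l).1.2.2.2 i j.
exists (fun l => projT1 (w l)), (fun l => (projT2 (w l)).1),
  (fun l => (projT2 (w l)).2),
  (fun l i j => projT1 (cid (qP l i j))).
split=> [l|l i j y|l]; first exact: (wP l).1; last exact: (wP l).2.
exact: (projT2 (cid (qP l i j))) y.
Qed.

Lemma connected_rV (R : realType) k : connected [set: 'rV[R]_k].
Proof.
have -> : [set: 'rV[R]_k] = \bigcup_(z in setT) ((fun s : R => s *: z) @` `[0, 1]).
  apply/seteqP; split => // z _; exists z => //; exists 1; last by rewrite scale1r.
  by rewrite /= in_itv /= ler01 lexx.
apply: bigcup_connected.
  exists 0 => z _; exists 0; last by rewrite scale0r.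
  by rewrite /= in_itv /= ler01 lexx.
move=> z _; apply: connected_continuous_connected; first exact: segment_connected.
by apply: continuous_subspaceT => s; exact: scalel_continuous.
Qed.

Lemma polynomial_ivp_noetherian (R : realType) m (D : set 'rV[R]_m)
    (F : 'rV[R]_m -> 'rV[R]_m) (X0 : 'rV[R]_m) :
  polynomial_ivp D F X0 -> noetherian_ivp D F X0.
Proof.
move=> [-> FP]; split; first exact: openT.
split; first exact: connected_rV.
split=> // l; have [p Fp] := FP l.
exists 0%N, (fun _ _ => 0), (psubst (fun i => pvar (lshift 0 i)) p).
split; last first.
  move=> y _; rewrite Fp psubstE; apply: mpoly.meval_eq => i.
  by rewrite pvarE /ext_point (unsplitK (inl _)).
by do !split; [exact: openT | exact: connected_rV | case | move=> ? []].
Qed.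

Lemma coord_proj_ofW (R : realType)
    (cls1 cls2 : forall m, set 'rV[R]_m -> ('rV[R]_m -> 'rV[R]_m) -> 'rV[R]_m -> Prop)
    n alpha beta (phi : R -> 'rV[R]_n) :
  (forall m D F X0, cls1 m D F X0 -> cls2 m D F X0) ->
  coord_proj_of cls1 alpha beta phi -> coord_proj_of cls2 alpha beta phi.
Proof.
move=> sub12 [m [hnm [D [F [X0 [psi [c1 rest]]]]]]].
by exists m, hnm, D, F, X0, psi; split=> //; exact: sub12.
Qed.

Theorem proposition7p4 (R : realType) (n : nat) (alpha beta : \bar R)
  (phi : R -> 'rV[R]_n) :
  (alpha < 0%:E)%E -> (0%:E < beta)%E ->
  (coord_proj_of (@noetherian_ivp R) alpha beta phi <->
   coord_proj_of (@polynomial_ivp R) alpha beta phi).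
Proof.
move=> _ _; split; last exact/coord_proj_ofW/polynomial_ivp_noetherian.
move=> [m [hnm [D [F [X0 [psi [FN [sol proj]]]]]]]].
have [r [h [p [q [hc hq hp]]]]] := noetherian_ivp_chains FN.
move: proj; apply: (chain_lift_coord_proj FN.1 hc hq hp sol).
Qed.
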